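(* Let $\Lambda$ be a (non-degenerate) real interval. A PAF $\psi:\mathcal P^N\to\mathcal P$ is Level-SP, unanimous and strong plausibility preserving if and only if it is dictatorial, i.e. there is $i\in N$ with $\psi(\mathbf p)=p_i$ for all $\mathbf p$.
   Context: Let $N=\{1,\dots,n\}$, $\mathcal P$ the Borel probability measures on $\Lambda$, $\mathcal C$ the CDFs on $\Lambda$, $\pi(p)(a)=p(\{x\in\Lambda:x\le a\})$. A PAF is a map $\psi:\mathcal P^N\to\mathcal P$ with associated CAF $\Psi$ given by $\Psi(\pi(p_1),\dots,\pi(p_n))=\pi(\psi(p_1,\dots,p_n))$; $P_i=\pi(p_i)$. $\mathbf z_{-i}(z_i')$ is $\mathbf z$ with $i$-th coordinate replaced by $z_i'$. $\psi$ is Level-SP if for every $i$, $\mathbf P$, $P_i'$, $a$: $P_i(a)<\Psi(\mathbf P)(a)\Rightarrow\Psi(\mathbf P)(a)\le\Psi(\mathbf P_{-i}(P_i'))(a)$ and $P_i(a)>\Psi(\mathbf P)(a)\Rightarrow\Psi(\mathbf P)(a)\ge\Psi(\mathbf P_{-i}(P_i'))(a)$. $\psi$ is unanimous if $\psi(p,\dots,p)=p$. $\psi$ is strong plausibility preserving if for every profile $\mathbf p$ and every Borel set $A\subseteq\Lambda$: if $p_i(A)>0$ for all $i\in N$ then $\psi(\mathbf p)(A)>0$. *)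

From mathcomp Require Import all_boot all_order all_algebra.
From mathcomp Require Import all_classical all_reals.
From mathcomp Require Import ereal topology normedtype sequences measure lebesgue_measure probability.
Set Implicit Arguments. Unset Strict Implicit. Unset Printing Implicit Defensive.
Import Order.TTheory GRing.Theory Num.Theory.
Local Open Scope classical_set_scope.
Local Open Scope ring_scope.

(* Borel probability measures on the interval Lambda, represented as Borel
   probability measures on R that give full mass to Lambda. *)
Definition ProbOn (R : realType) (L : interval R) : Type :=
  {P : probability R R | P (~` [set` L]) = 0%E}.

Definition pm (R : realType) (L : interval R) (p : ProbOn L) : probability R R :=
  proj1_sig p.

Definition cdf (R : realType) (L : interval R) (p : ProbOn L) (a : R) : \bar R :=
  pm p [set x | x \in L /\ x <= a].

Definition meq (R : realType) (L : interval R) (p q : ProbOn L) : Prop :=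
  forall A : set R, measurable A -> A `<=` [set` L] -> pm p A = pm q A.

Definition profile (R : realType) (L : interval R) (n : nat) := 'I_n -> ProbOn L.

Definition PAF (R : realType) (L : interval R) (n : nat) :=
  profile L n -> ProbOn L.

Definition upd (R : realType) (L : interval R) (n : nat)
  (p : profile L n) (i : 'I_n) (q : ProbOn L) : profile L n :=
  fun j => if j == i then q else p j.

Definition level_SP (R : realType) (L : interval R) (n : nat) (psi : PAF L n) : Prop :=
  forall (i : 'I_n) (p : profile L n) (q : ProbOn L) (a : R), a \in L ->
    ((cdf (p i) a < cdf (psi p) a)%E -> (cdf (psi p) a <= cdf (psi (upd p i q)) a)%E) /\
    ((cdf (p i) a > cdf (psi p) a)%E -> (cdf (psi p) a >= cdf (psi (upd p i q)) a)%E).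

Definition unanimous (R : realType) (L : interval R) (n : nat) (psi : PAF L n) : Prop :=
  forall q : ProbOn L, meq (psi (fun _ => q)) q.

Definition strong_plausibility_preserving (R : realType) (L : interval R) (n : nat)
  (psi : PAF L n) : Prop :=
  forall (p : profile L n) (A : set R), measurable A -> A `<=` [set` L] ->
    (forall i, (0 < pm (p i) A)%E) -> (0 < pm (psi p) A)%E.

Definition dictatorial (R : realType) (L : interval R) (n : nat) (psi : PAF L n) : Prop :=
  exists i : 'I_n, forall p : profile L n, meq (psi p) (p i).

(* Call a coalition [S] decisive at [x] if every profile in which exactly the voters of
   [S] put all their mass on [(-oo, x]] is aggregated to CDF value [1] at [x].  Level-SP
   makes [psi p] at [x] depend only, and monotonically, on the values [p j] at [x], and
   lets voters be replaced one at a time; with unanimity, the voters of a decisive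
   coalition bound [psi p] from below and those outside a powerless one bound it from
   above.  Strong plausibility preservation forbids [psi p] to be flat on two disjoint
   intervals when every voter rises on one of them.  Testing this on staircase profiles
   shows that at each inner point of [L] exactly one of [S] and its complement is
   decisive, that this does not depend on the point, and that decisive coalitions are
   closed under intersection.  So some singleton [{d}] is decisive: [psi p] and [p d]
   have the same CDF on the interior of [L], hence by right continuity on all of [L],
   and CDFs determine Borel probability measures. *)

From Pilot Require Import Defs.
From mathcomp Require Import all_boot all_order all_algebra.
From mathcomp Require Import all_classical all_reals.
From mathcomp Require Import ereal topology normedtype sequences measure lebesgue_measure probability.
From mathcomp Require Import ring lra.
(* [probability] also exports a [cdf]; re-importing [Defs] makes [cdf] refer to [Defs.cdf]. *)
Import Defs.
Import Order.TTheory GRing.Theory Num.Theory.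
Local Open Scope classical_set_scope.
Local Open Scope ring_scope.
Set Implicit Arguments. Unset Strict Implicit. Unset Printing Implicit Defensive.

Section Cdf.
Context (R : realType) (L : interval R).

Lemma itv_between x y z : x \in L -> z \in L -> x <= y -> y <= z -> y \in L.
Proof. by move=> xL zL xy yz; apply: (interval_is_interval xL zL); rewrite xy yz. Qed.

Definition below (a : R) : set R := [set x | x \in L /\ x <= a].

Lemma belowE a : below a = [set` L] `&` [set` `]-oo, a]].
Proof.
apply/seteqP; split => x /=; first by move=> [xL xa]; split => //; rewrite in_itv /= xa.
by move=> [xL]; rewrite in_itv /=.
Qed.

Lemma measurable_below a : measurable (below a).
Proof. by rewrite belowE; apply: measurableI; exact: measurable_itv. Qed.

Lemma below_sub a : below a `<=` [set` L].
Proof. by move=> x []. Qed.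

Lemma cdf_meq (p q : ProbOn L) a : meq p q -> cdf p a = cdf q a.
Proof. by move=> pq; exact: pq (measurable_below a) (@below_sub a). Qed.

Lemma cdf_ge0 (p : ProbOn L) a : (0 <= cdf p a)%E.
Proof. exact: measure_ge0. Qed.

Lemma cdf_le1 (p : ProbOn L) a : (cdf p a <= 1)%E.
Proof. exact: probability_le1 (measurable_below a). Qed.

Lemma cdf_fin_num (p : ProbOn L) a : cdf p a \is a fin_num.
Proof. by rewrite ge0_fin_numE ?cdf_ge0 // (le_lt_trans (cdf_le1 p a)) // ltey. Qed.

Lemma le_cdf (p : ProbOn L) a b : a <= b -> (cdf p a <= cdf p b)%E.
Proof.
move=> ab; apply: le_measure; rewrite ?inE; try exact: measurable_below.
by move=> x [xL xa]; split => //; exact: le_trans ab.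
Qed.

Lemma pm_itv (p : ProbOn L) : pm p [set` L] = 1%E.
Proof.
have mL := measurable_itv L.
have finL : pm p [set` L] \is a fin_num.
  by rewrite ge0_fin_numE ?measure_ge0 // (le_lt_trans (probability_le1 _ mL)) ?ltey.
move: (probability_setC (pm p) mL); rewrite (proj2_sig p) -(fineK finL) -EFinB.
by move=> /eqP; rewrite eq_sym eqe subr_eq0 => /eqP <-.
Qed.

Lemma cdf_ubL (p : ProbOn L) a : (forall z, z \in L -> z <= a) -> cdf p a = 1%E.
Proof.
move=> ubL; rewrite -(pm_itv p); congr (pm p _).
by apply/seteqP; split => x /=; [case | split => //; exact: ubL].
Qed.

Lemma pm_itv_oc (p : ProbOn L) t u : t \in L -> u \in L -> t <= u ->
  pm p [set` `]t, u]] = (cdf p u - cdf p t)%E.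
Proof.
move=> tL uL tu.
have -> : [set` `]t, u]] = below u `\` below t.
  apply/seteqP; split => x /=; rewrite in_itv /=.
    move=> /andP[tx xu]; split; first by split => //; exact: itv_between tL uL (ltW tx) xu.
    by move=> [_ xt]; move: tx; rewrite ltNge xt.
  by move=> [[xL xu] xt]; rewrite xu andbT ltNge; apply/negP => ?; apply: xt.
rewrite measureD; try exact: measurable_below.
  congr (_ - pm p _)%E; apply/seteqP; split => x /=; first by case.
  by move=> [xL xt]; split => //; split => //; exact: le_trans tu.
by rewrite (le_lt_trans (cdf_le1 p u)) // ltey.
Qed.

End Cdf.

Section Discrete.
Context (R : realType) (L : interval R) (dflt : ProbOn L).

Definition is_discrete (ws zs : seq R) : Prop :=
  (forall i, (i < size ws)%N -> 0 <= nth 0 ws i /\ nth 0 zs i \in L) /\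
  \sum_(i < size ws) nth 0 ws i = 1.

Let max0_ge0 (x : R) : 0 <= Num.max x 0.
Proof. by rewrite le_max lexx orbT. Qed.

Let nonneg_part (x : R) : {nonneg R} := NngNum (max0_ge0 x).

(* The weights are clipped at [0] so that [discrete_measure] is a measure for all [ws]. *)
Definition discrete_measure (ws zs : seq R) :=
  msum (fun i => mscale (nonneg_part (nth 0 ws i)) \d_(nth 0 zs i)) (size ws).

Lemma discrete_measureE ws zs U : is_discrete ws zs ->
  discrete_measure ws zs U = (\sum_(i < size ws) nth 0 ws i * (nth 0 zs i \in U)%:R)%:E.
Proof.
move=> [ws_ok _]; rewrite /discrete_measure /msum /mscale /= sumEFin; congr (_%:E).
apply: eq_bigr => i _; congr (_ * _) => /=.
by apply/max_idPl; case: (ws_ok i (ltn_ord i)).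
Qed.

Lemma discrete_measure_setT ws zs : is_discrete ws zs -> discrete_measure ws zs setT = 1%E.
Proof.
move=> ok; rewrite discrete_measureE //; congr (_%:E); rewrite -[RHS](proj2 ok).
by apply: eq_bigr => i _; rewrite mem_set // mulr1.
Qed.

Lemma discrete_measure_notL ws zs : is_discrete ws zs ->
  discrete_measure ws zs (~` [set` L]) = 0%E.
Proof.
move=> ok; rewrite discrete_measureE //; congr (_%:E); rewrite big1 // => i _.
have ziL := proj2 (proj1 ok i (ltn_ord i)).
by rewrite memNset ?mulr0 //= => /(_ ziL).
Qed.

Let mnormalize1E (mu : {measure set R -> \bar R}) (P : probability R R) U :
  mu setT = 1%E -> mnormalize mu P U = mu U.
Proof. by move=> mu1; rewrite /mnormalize mu1 onee_eq0 /= invr1 mule1. Qed.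

Definition discrete_prob ws zs : probability R R :=
  mnormalize (discrete_measure ws zs) \d_(0 : R).

Lemma discrete_probE ws zs U : is_discrete ws zs ->
  discrete_prob ws zs U = discrete_measure ws zs U.
Proof.
move=> /discrete_measure_setT mu1.
by rewrite /discrete_prob; apply: mnormalize1E.
Qed.

Lemma discrete_prob_notL ws zs : is_discrete ws zs -> discrete_prob ws zs (~` [set` L]) = 0%E.
Proof. by move=> ok; rewrite discrete_probE // discrete_measure_notL. Qed.

(* [dflt] is only a junk value, returned when the weights are not a distribution on [L]. *)
Definition discrete ws zs : ProbOn L :=
  match pselect (is_discrete ws zs) with
  | left ok => exist _ (discrete_prob ws zs) (discrete_prob_notL ok)
  | right _ => dflt
  end.

Lemma cdf_discrete ws zs y : is_discrete ws zs ->
  cdf (discrete ws zs) y = (\sum_(i < size ws) nth 0 ws i * (nth 0 zs i <= y)%R%:R)%:E.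
Proof.
move=> ok; rewrite /cdf /discrete; case: pselect => // ok' /=.
rewrite discrete_probE // discrete_measureE //; congr (_%:E); apply: eq_bigr => i _.
have ziL := proj2 (proj1 ok i (ltn_ord i)).
by have [ziy|ziy] := boolP (nth 0 zs i <= y);
  [rewrite mem_set | rewrite memNset //= => -[_]; exact/negP].
Qed.

Definition dirac_on z : ProbOn L := discrete [:: 1] [:: z].

Lemma cdf_dirac_on z y : z \in L -> cdf (dirac_on z) y = (z <= y)%R%:R%:E.
Proof.
move=> zL; rewrite cdf_discrete ?big_ord1 /= ?mul1r //.
by split; [case => //= _ | rewrite big_ord1].
Qed.

Definition staircase (c0 c1 c2 c3 z0 z1 z2 z3 z4 : R) : ProbOn L :=
  discrete [:: c0; c1 - c0; c2 - c1; c3 - c2; 1 - c3] [:: z0; z1; z2; z3; z4].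

Lemma cdf_staircase (c0 c1 c2 c3 z0 z1 z2 z3 z4 : R) :
  0 <= c0 -> c0 <= c1 -> c1 <= c2 -> c2 <= c3 -> c3 <= 1 ->
  z0 \in L -> z4 \in L -> z0 < z1 -> z1 < z2 -> z2 < z3 -> z3 < z4 ->
  let P := staircase c0 c1 c2 c3 z0 z1 z2 z3 z4 in
  [/\ cdf P z0 = c0%:E, cdf P z1 = c1%:E, cdf P z2 = c2%:E & cdf P z3 = c3%:E].
Proof.
move=> h0 h1 h2 h3 h4 z0L z4L l01 l12 l23 l34 P.
have l02 := lt_trans l01 l12; have l03 := lt_trans l02 l23.
have l13 := lt_trans l12 l23; have l14 := lt_trans l13 l34.
have l24 := lt_trans l23 l34; have l04 := lt_trans l03 l34.
have ok : is_discrete [:: c0; c1 - c0; c2 - c1; c3 - c2; 1 - c3] [:: z0; z1; z2; z3; z4].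
  split; last by rewrite !big_ord_recl big_ord0 /=; lra.
  case=> [|[|[|[|[|//]]]]] _ /=; (split; [rewrite ?subr_ge0 // |]);
  by apply: (itv_between z0L z4L); rewrite ?lexx ?ltW.
rewrite /P /staircase; split; rewrite cdf_discrete //= !big_ord_recl big_ord0 /=;
  rewrite ?lexx ?(ltW l01) ?(ltW l02) ?(ltW l03) ?(ltW l12) ?(ltW l13) ?(ltW l23);
  rewrite ?(lt_geF l01) ?(lt_geF l02) ?(lt_geF l03) ?(lt_geF l04) ?(lt_geF l12)
          ?(lt_geF l13) ?(lt_geF l14) ?(lt_geF l23) ?(lt_geF l24) ?(lt_geF l34);
  rewrite /= ?mulr1n ?mulr0n; congr (_%:E); lra.
Qed.

End Discrete.

Section Profiles.
Context (R : realType) (L : interval R) (n : nat).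

Lemma upd_updK (p : profile L n) i q : upd (upd p i q) i (p i) = p.
Proof. by apply: funext => j; rewrite /upd; case: eqP => // ->. Qed.

Lemma upd_same (p : profile L n) i q : upd p i q i = q.
Proof. by rewrite /upd eqxx. Qed.

Definition indicator_at x (B : profile L n) (S : {set 'I_n}) : Prop :=
  forall j, cdf (B j) x = (j \in S)%:R%:E.

Definition merge (K : pred 'I_n) (p q : profile L n) : profile L n :=
  fun j => if K j then q j else p j.

Lemma merge_predT (p q : profile L n) : merge predT p q = q.
Proof. by []. Qed.

Lemma merge_ind (Inv : profile L n -> Prop) (K : pred 'I_n) (p q : profile L n) :
  (forall r i, K i -> r i = p i -> Inv r -> Inv (upd r i (q i))) ->
  Inv p -> Inv (merge K p q).
Proof.
move=> step Ip; pose r k := merge (fun j => K j && (j < k)%N) p q.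
suff : forall k, Inv (r k).
  by move/(_ n); congr Inv; apply: funext => j; rewrite /r /merge ltn_ord andbT.
elim=> [|k IH]; first by congr Inv: Ip; apply: funext => j; rewrite /r /merge andbF.
have [kn|nk] := ltnP k n; last first.
  congr Inv: IH; apply: funext => j; rewrite /r /merge.
  by have jk := leq_trans (ltn_ord j) nk; rewrite ltnS jk (ltnW jk).
set i := Ordinal kn.
have rS : r k.+1 = if K i then upd (r k) i (q i) else r k.
  apply: funext => j; rewrite /r /merge /upd ltnS leq_eqVlt.
  have [->|ne] := eqVneq j i; first by rewrite /= eqxx; case: (K i); rewrite /= ?eqxx ?ltnn ?andbF.
  have -> : (val j == k) = false by apply/negbTE; apply: contra ne => /eqP jk; apply/eqP/val_inj.
  by case: (K i); rewrite /= ?(negbTE ne).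
rewrite rS; case Ki : (K i) => //.
by apply: step => //; rewrite /r /merge ltnn andbF.
Qed.

End Profiles.

Section LevelSP.
Context (R : realType) (L : interval R) (n : nat) (psi : PAF L n).
Hypothesis psiSP : level_SP psi.

Local Notation F p x := (cdf (psi p) x).

Lemma levelSP_revert (p : profile L n) i q x : x \in L ->
  ((cdf q x < F (upd p i q) x)%E -> (F (upd p i q) x <= F p x)%E) /\
  ((cdf q x > F (upd p i q) x)%E -> (F (upd p i q) x >= F p x)%E).
Proof. by move=> xL; have := psiSP i (upd p i q) (p i) xL; rewrite upd_updK upd_same. Qed.

Lemma levelSP_upd_eq (p : profile L n) i q x : x \in L ->
  cdf q x = cdf (p i) x -> F (upd p i q) x = F p x.
Proof.
move=> xL qi; have [up dn] := psiSP i p q xL; have [up' dn'] := levelSP_revert p i q xL.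
rewrite qi in up' dn'.
have [lt|gt|eq] := ltgtP (cdf (p i) x) (F p x).
- by apply/eqP; rewrite eq_le up // andbT up' // (lt_le_trans lt (up lt)).
- by apply/eqP; rewrite eq_le dn //= dn' // (le_lt_trans (dn gt) gt).
- have [lt'|gt'|eq'] := ltgtP (cdf (p i) x) (F (upd p i q) x).
  + by move: (lt_le_trans lt' (up' lt')); rewrite -eq ltxx.
  + by move: (le_lt_trans (dn' gt') gt'); rewrite -eq ltxx.
  + by rewrite -eq'.
Qed.

Lemma levelSP_upd_mono (p : profile L n) i q x : x \in L ->
  (cdf (p i) x <= cdf q x)%E -> (F p x <= F (upd p i q) x)%E.
Proof.
move=> xL le_iq; have [up _] := psiSP i p q xL; have [_ dn'] := levelSP_revert p i q xL.
have [lt|ge] := ltP (cdf (p i) x) (F p x); first exact: up.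
rewrite leNgt; apply/negP => lt'.
by move: (dn' (lt_le_trans lt' (le_trans ge le_iq))); rewrite leNgt lt'.
Qed.

Lemma levelSP_upd_above (p : profile L n) i q x : x \in L ->
  (F p x < cdf (p i) x)%E -> (F p x <= cdf q x)%E -> F (upd p i q) x = F p x.
Proof.
move=> xL lt le; have [_ dn] := psiSP i p q xL; have [_ dn'] := levelSP_revert p i q xL.
apply/eqP; rewrite eq_le dn //= leNgt; apply/negP => lt'.
by move: (dn' (lt_le_trans lt' le)); rewrite leNgt lt'.
Qed.

Lemma levelSP_upd_below (p : profile L n) i q x : x \in L ->
  (cdf (p i) x < F p x)%E -> (cdf q x <= F p x)%E -> F (upd p i q) x = F p x.
Proof.
move=> xL lt le; have [up _] := psiSP i p q xL; have [up' _] := levelSP_revert p i q xL.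
apply/eqP; rewrite eq_le up // andbT leNgt; apply/negP => lt'.
by move: (up' (le_lt_trans le lt')); rewrite leNgt lt'.
Qed.

Lemma levelSP_cdf_eq (p q : profile L n) x : x \in L ->
  (forall j, cdf (q j) x = cdf (p j) x) -> F q x = F p x.
Proof.
move=> xL pq; rewrite -(merge_predT p q).
apply: (merge_ind (Inv := fun r => F r x = F p x)) => // r i _ ri <-.
by apply: levelSP_upd_eq => //; rewrite ri pq.
Qed.

Lemma levelSP_cdf_mono (p q : profile L n) x : x \in L ->
  (forall j, (cdf (p j) x <= cdf (q j) x)%E) -> (F p x <= F q x)%E.
Proof.
move=> xL pq; rewrite -(merge_predT p q).
apply: (merge_ind (Inv := fun r => (F p x <= F r x)%E)) => // r i _ ri pr.
by apply: le_trans pr _; apply: levelSP_upd_mono => //; rewrite ri pq.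
Qed.

(* If [F p x < m], moving the voters of [S] (all above [psi]) to [B] leaves [psi]
   unchanged, while [B] lies pointwise below the resulting profile. *)
Lemma levelSP_lb (p B : profile L n) (S : {set 'I_n}) x (m : \bar R) : x \in L ->
  indicator_at x B S -> (m <= F B x)%E -> (forall j, j \in S -> (m <= cdf (p j) x)%E) ->
  (m <= F p x)%E.
Proof.
move=> xL BS mB mp; rewrite leNgt; apply/negP => Fpm.
have FpS : F (merge [pred j | j \in S] p B) x = F p x.
  apply: (merge_ind (Inv := fun r => F r x = F p x)) => // r i iS ri Frp.
  rewrite /= in iS; rewrite -Frp; apply: levelSP_upd_above; rewrite ?Frp //.
    by rewrite ri (lt_le_trans Fpm) ?mp.
  by rewrite BS iS cdf_le1.
have : (F B x <= F (merge [pred j | j \in S] p B) x)%E.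
  apply: levelSP_cdf_mono => // j; rewrite /merge /=; case: ifPn => // jS.
  by rewrite BS (negbTE jS) cdf_ge0.
by rewrite FpS => /(le_trans mB); rewrite leNgt Fpm.
Qed.

Lemma levelSP_ub (p B : profile L n) (S : {set 'I_n}) x (M : \bar R) : x \in L ->
  indicator_at x B S -> (F B x <= M)%E -> (forall j, j \notin S -> (cdf (p j) x <= M)%E) ->
  (F p x <= M)%E.
Proof.
move=> xL BS BM pM; rewrite leNgt; apply/negP => MFp.
have FpS : F (merge [pred j | j \notin S] p B) x = F p x.
  apply: (merge_ind (Inv := fun r => F r x = F p x)) => // r i iS ri Frp.
  rewrite /= in iS; rewrite -Frp; apply: levelSP_upd_below; rewrite ?Frp //.
    by rewrite ri (le_lt_trans _ MFp) ?pM.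
  by rewrite BS (negbTE iS) cdf_ge0.
have : (F (merge [pred j | j \notin S] p B) x <= F B x)%E.
  apply: levelSP_cdf_mono => // j; rewrite /merge /=; case: ifPn => // /negPn jS.
  by rewrite BS jS cdf_le1.
by rewrite FpS => /le_trans/(_ BM); rewrite leNgt MFp.
Qed.

End LevelSP.

Section Decisive.
Context (R : realType) (L : interval R) (n : nat) (psi : PAF L n).
Hypotheses (psiSP : level_SP psi) (psiU : unanimous psi)
  (psiSPP : strong_plausibility_preserving psi).
Variable dflt : ProbOn L.

Local Notation F p x := (cdf (psi p) x).
Local Notation dirac_on := (dirac_on dflt).

Lemma unanimous_cdf q y : F (fun=> q) y = cdf q y.
Proof. exact/cdf_meq/psiU. Qed.

Lemma cdf_psi_ub (p : profile L n) y w (M : \bar R) : y \in L -> w \in L -> y < w ->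
  (0 <= M)%E -> (forall j, (cdf (p j) y <= M)%E) -> (F p y <= M)%E.
Proof.
move=> yL wL yw M0 pM.
apply: (levelSP_ub psiSP (B := fun=> dirac_on w) (S := finset.set0)) => //.
- by move=> j; rewrite cdf_dirac_on // (lt_geF yw) inE.
- by rewrite unanimous_cdf cdf_dirac_on // (lt_geF yw).
Qed.

Lemma cdf_psi_lb (p : profile L n) y z (m : \bar R) : y \in L -> z \in L -> z <= y ->
  (m <= 1)%E -> (forall j, (m <= cdf (p j) y)%E) -> (m <= F p y)%E.
Proof.
move=> yL zL zy m1 mp.
apply: (levelSP_lb psiSP (B := fun=> dirac_on z) (S := [set: 'I_n]%SET)) => //.
- by move=> j; rewrite cdf_dirac_on // zy inE.
- by rewrite unanimous_cdf cdf_dirac_on // zy.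
Qed.

Lemma spp_no_flat_pair (p : profile L n) (z0 z1 z2 z3 : R) : z0 \in L -> z3 \in L ->
  z0 < z1 -> z1 < z2 -> z2 < z3 ->
  (forall j, (cdf (p j) z0 < cdf (p j) z1)%E \/ (cdf (p j) z2 < cdf (p j) z3)%E) ->
  (F p z1 <= F p z0)%E -> (F p z3 <= F p z2)%E -> False.
Proof.
move=> z0L z3L l01 l12 l23 incr flat1 flat2.
have l13 := lt_trans l12 l23; have l02 := lt_trans l01 l12.
have z1L : z1 \in L by apply: (itv_between z0L z3L); exact: ltW.
have z2L : z2 \in L by apply: (itv_between z0L z3L); exact: ltW.
set I1 := [set` `]z0, z1]]; set I2 := [set` `]z2, z3]].
have mI1 : measurable I1 by exact: measurable_itv.
have mI2 : measurable I2 by exact: measurable_itv.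
have subL : I1 `|` I2 `<=` [set` L].
  rewrite subUset; split => x xI; rewrite /= in xI; case/andP: xI; rewrite !bnd_simp => lx xr.
    by apply: (itv_between z0L z3L); [exact: ltW | exact: le_trans xr (ltW l13)].
  by apply: (itv_between z0L z3L); [exact: ltW (lt_trans l02 lx) | ].
have I12 : I1 `&` I2 = set0.
  apply/seteqP; split => // x []; rewrite /I1 /I2 /= !in_itv /= => /andP[_ x1] /andP[x2 _].
  by move: (le_lt_trans x1 (lt_trans l12 x2)); rewrite ltxx.
have mI : measurable (I1 `|` I2) by exact: measurableU.
have pos j : (0 < pm (p j) (I1 `|` I2))%E.
  have le1 : (pm (p j) I1 <= pm (p j) (I1 `|` I2))%E.
    by apply: le_measure; rewrite ?inE //; exact: subsetUl.
  have le2 : (pm (p j) I2 <= pm (p j) (I1 `|` I2))%E.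
    by apply: le_measure; rewrite ?inE //; exact: subsetUr.
  have [lt|lt] := incr j; [apply: lt_le_trans le1 | apply: lt_le_trans le2];
  by rewrite pm_itv_oc ?sube_gt0 // ltW.
have I1I2 : pm (psi p) (I1 `|` I2) = (pm (psi p) I1 + pm (psi p) I2)%E by exact: measureU.
have := psiSPP mI subL pos.
rewrite I1I2 !pm_itv_oc //; try exact: ltW.
by rewrite ltNge adde_le0 // sube_le0.
Qed.

Lemma spp_no_flat_staircase (c0 c1 c2 c3 : 'I_n -> R) (z0 z1 z2 z3 z4 : R) :
  z0 \in L -> z4 \in L -> z0 < z1 -> z1 < z2 -> z2 < z3 -> z3 < z4 ->
  (forall j, [/\ 0 <= c0 j, c0 j <= c1 j, c1 j <= c2 j, c2 j <= c3 j & c3 j <= 1]) ->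
  (forall j, c0 j < c1 j \/ c2 j < c3 j) ->
  (forall p : profile L n, (forall j, [/\ cdf (p j) z0 = (c0 j)%:E,
      cdf (p j) z1 = (c1 j)%:E, cdf (p j) z2 = (c2 j)%:E & cdf (p j) z3 = (c3 j)%:E]) ->
     (F p z1 <= F p z0)%E /\ (F p z3 <= F p z2)%E) -> False.
Proof.
move=> z0L z4L l01 l12 l23 l34 c_mono incr flat.
pose p j := staircase dflt (c0 j) (c1 j) (c2 j) (c3 j) z0 z1 z2 z3 z4.
have cdf_p j : [/\ cdf (p j) z0 = (c0 j)%:E,
    cdf (p j) z1 = (c1 j)%:E, cdf (p j) z2 = (c2 j)%:E & cdf (p j) z3 = (c3 j)%:E].
  by have [? ? ? ? ?] := c_mono j; apply: cdf_staircase.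
have [flat1 flat2] := flat p cdf_p.
have z3L : z3 \in L.
  by apply: (itv_between z0L z4L); [exact: ltW (lt_trans l01 (lt_trans l12 l23)) | exact: ltW].
apply: (spp_no_flat_pair z0L z3L l01 l12 l23 _ flat1 flat2) => j.
by have [-> -> -> ->] := cdf_p j; rewrite !lte_fin; exact: incr.
Qed.

Definition split_profile (S : {set 'I_n}) x w : profile L n :=
  fun j => if j \in S then dirac_on x else dirac_on w.

Lemma indicator_split_profile S x w y : x \in L -> w \in L -> x <= y -> y < w ->
  indicator_at y (split_profile S x w) S.
Proof.
move=> xL wL xy yw j; rewrite /split_profile.
by case: (j \in S); rewrite cdf_dirac_on // ?xy ?(lt_geF yw).
Qed.

(* Staircase: voters of [S] rise on [(z0, z1]], the others on [(z2, z3]].  The voters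
   bound [psi] from above at [z1] and [z3]; the split profiles, whose aggregate is at
   least [e], bound it from below by the same values at [z0] and [z2]. *)
Lemma split_profiles_not_both_pos S x v : x \in L -> v \in L -> x < v ->
  (0 < F (split_profile S x v) x)%E -> (0 < F (split_profile (~: S) x v) x)%E -> False.
Proof.
move=> xL vL xv FS FSC.
set B := split_profile S x v; set B' := split_profile (~: S) x v.
pose e := Num.min (fine (F B x)) (fine (F B' x)).
have eB : (e%:E <= F B x)%E by rewrite -(fineK (cdf_fin_num _ _)) lee_fin ge_min lexx.
have eB' : (e%:E <= F B' x)%E by rewrite -(fineK (cdf_fin_num _ _)) lee_fin ge_min lexx orbT.
have e0 : 0 < e by rewrite lt_min -!lte_fin !fineK ?cdf_fin_num ?FS ?FSC.
have e1 : e <= 1 by rewrite -lee_fin (le_trans eB) // cdf_le1.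
pose d := (v - x) / 4.
have d0 : 0 < d by rewrite divr_gt0 // subr_gt0.
have vE : v = x + 4 * d by rewrite /d; field.
have inL y : x <= y -> y <= v -> y \in L by exact: itv_between.
apply: (spp_no_flat_staircase
  (c0 := fun j => if j \in S then 0 else e / 2)
  (c1 := fun j => if j \in S then e / 4 else e / 2)
  (c2 := fun j => if j \in S then 3 * e / 4 else e / 2)
  (c3 := fun j => if j \in S then 3 * e / 4 else 5 * e / 8)
  (z1 := x + d) (z2 := x + 2 * d) (z3 := x + 3 * d) xL vL);
  rewrite ?vE; try lra.
- by move=> j; case: (j \in S); split; lra.
- by move=> j; case: (j \in S); [left | right]; lra.
move=> p cdf_p; split.
- apply: (@le_trans _ _ (e / 2)%:E).
    apply: (cdf_psi_ub (w := v)) => //; [apply: inL | | rewrite lee_fin |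
      move=> j; have [_ -> _ _] := cdf_p j; case: (j \in S); rewrite lee_fin]; lra.
  apply: (levelSP_lb psiSP (B := B') (S := ~: S)) => //.
  + exact: indicator_split_profile.
  + by apply: le_trans eB'; rewrite lee_fin; lra.
  + by move=> j; rewrite inE => /negbTE jS; have [-> _ _ _] := cdf_p j; rewrite jS.
- apply: (@le_trans _ _ (3 * e / 4)%:E).
    apply: (cdf_psi_ub (w := v)) => //; [apply: inL | | rewrite lee_fin |
      move=> j; have [_ _ _ ->] := cdf_p j; case: (j \in S); rewrite lee_fin]; lra.
  apply: (levelSP_lb psiSP (B := B) (S := S)).
  + by apply: inL; lra.
  + by apply: indicator_split_profile => //; lra.
  + apply: le_trans (le_trans eB (le_cdf _ _)); [rewrite lee_fin | ]; lra.
  + by move=> j jS; have [_ _ -> _] := cdf_p j; rewrite jS.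
Qed.

(* Dually, voters of [S] rise on [(z2, z3]] and the others on [(z0, z1]]; now the split
   profiles, whose aggregate is at most [e < 1], give the upper bounds. *)
Lemma split_profiles_not_both_lt1 S z x v : z \in L -> v \in L -> z < x -> x < v ->
  (F (split_profile S z v) x < 1)%E -> (F (split_profile (~: S) z v) x < 1)%E -> False.
Proof.
move=> zL vL zx xv FS FSC.
have xL : x \in L by apply: itv_between zL vL (ltW zx) (ltW xv).
set B := split_profile S z v; set B' := split_profile (~: S) z v.
pose e := Num.max (fine (F B x)) (fine (F B' x)).
have Be : (F B x <= e%:E)%E by rewrite -(fineK (cdf_fin_num _ _)) lee_fin le_max lexx.
have B'e : (F B' x <= e%:E)%E by rewrite -(fineK (cdf_fin_num _ _)) lee_fin le_max lexx orbT.
have e1 : e < 1 by rewrite gt_max -!lte_fin !fineK ?cdf_fin_num ?FS ?FSC.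
have e0 : 0 <= e by rewrite -lee_fin (le_trans _ Be) // cdf_ge0.
pose d := (x - z) / 4.
have d0 : 0 < d by rewrite divr_gt0 // subr_gt0.
have xE : x = z + 4 * d by rewrite /d; field.
have inL y : z <= y -> y <= v -> y \in L by exact: itv_between.
apply: (spp_no_flat_staircase
  (c0 := fun=> e)
  (c1 := fun j => if j \in S then e else e + (1 - e) / 4)
  (c2 := fun j => if j \in S then e + (1 - e) / 2 else e + (1 - e) / 4)
  (c3 := fun j => if j \in S then e + 3 * (1 - e) / 4 else e + (1 - e) / 4)
  (z1 := z + d) (z2 := z + 2 * d) (z3 := z + 3 * d) zL xL); try lra.
- by move=> j; case: (j \in S); split; lra.
- by move=> j; case: (j \in S); [right | left]; lra.
move=> p cdf_p; split.
- apply: (@le_trans _ _ e%:E).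
    apply: (levelSP_ub psiSP (B := B') (S := ~: S)).
    + by apply: inL; lra.
    + by apply: indicator_split_profile => //; lra.
    + by apply: le_trans B'e; apply: le_cdf; lra.
    + by move=> j; rewrite inE negbK => jS; have [_ -> _ _] := cdf_p j; rewrite jS.
  apply: (cdf_psi_lb (z := z)) => //; first by rewrite lee_fin; lra.
  by move=> j; have [-> _ _ _] := cdf_p j.
- apply: (@le_trans _ _ (e + (1 - e) / 4)%:E).
    apply: (levelSP_ub psiSP (B := B) (S := S)).
    + by apply: inL; lra.
    + by apply: indicator_split_profile => //; lra.
    + by apply: le_trans (le_trans (le_cdf _ _) Be) _; [lra | rewrite lee_fin; lra].
    + by move=> j /negbTE jS; have [_ _ _ ->] := cdf_p j; rewrite jS.
  apply: (cdf_psi_lb (z := z)) => //; [apply: inL | | rewrite lee_fin |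
    move=> j; have [_ _ -> _] := cdf_p j; case: (j \in S); rewrite lee_fin]; lra.
Qed.

Definition inner x :=
  [/\ x \in L, exists2 z, z \in L & z < x & exists2 v, v \in L & x < v].

Lemma inner_between a b y : a \in L -> b \in L -> a < y -> y < b -> inner y.
Proof.
by move=> aL bL ay yb; split; [exact: itv_between aL bL (ltW ay) (ltW yb) | exists a | exists b].
Qed.

Definition decisive x (S : {set 'I_n}) := forall B, indicator_at x B S -> F B x = 1%E.

Definition powerless x (S : {set 'I_n}) := forall B, indicator_at x B S -> F B x = 0%E.

Lemma exists_indicator x (S : {set 'I_n}) : inner x ->
  exists B : profile L n, indicator_at x B S.
Proof. by case=> xL _ [v vL xv]; exists (split_profile S x v); exact: indicator_split_profile. Qed.

Lemma indicator_cdf_eq x B B' S : x \in L ->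
  indicator_at x B S -> indicator_at x B' S -> F B x = F B' x.
Proof. by move=> xL BS B'S; apply: (levelSP_cdf_eq psiSP) => // j; rewrite BS B'S. Qed.

Lemma decisive_powerless_excl x S : inner x -> decisive x S -> powerless x S -> False.
Proof.
move=> ix SW SZ; have [B BS] := exists_indicator S ix.
by move: (SW B BS); rewrite SZ // => /eqP; rewrite eq_sym onee_eq0.
Qed.

Lemma decisive_dichotomy x S : inner x ->
  (decisive x S /\ powerless x (~: S)) \/ (powerless x S /\ decisive x (~: S)).
Proof.
case=> xL [z zL zx] [v vL xv].
set B := split_profile S x v; set B' := split_profile (~: S) x v.
have BS : indicator_at x B S by exact: indicator_split_profile.
have B'S : indicator_at x B' (~: S) by exact: indicator_split_profile.
have not_both_pos : ~ ((0 < F B x)%E /\ (0 < F B' x)%E).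
  by case; exact: split_profiles_not_both_pos.
have not_both_lt1 : ~ ((F B x < 1)%E /\ (F B' x < 1)%E).
  rewrite -(indicator_cdf_eq xL (indicator_split_profile S zL vL (ltW zx) xv) BS).
  rewrite -(indicator_cdf_eq xL (indicator_split_profile (~: S) zL vL (ltW zx) xv) B'S).
  by case; exact: split_profiles_not_both_lt1.
have [B0 B1] := (cdf_ge0 (psi B) x, cdf_le1 (psi B) x).
have [B'0 B'1] := (cdf_ge0 (psi B') x, cdf_le1 (psi B') x).
have [pos|nonpos] := ltP 0%E (F B x).
- have FB' : F B' x = 0%E.
    by apply/eqP; rewrite eq_le B'0 andbT leNgt; apply/negP => ?; exact: not_both_pos.
  have FB : F B x = 1%E.
    by apply/eqP; rewrite eq_le B1 leNgt; apply/negP => ?; apply: not_both_lt1; rewrite FB'.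
  left; split => C CS.
    by rewrite (indicator_cdf_eq xL CS BS).
  by rewrite (indicator_cdf_eq xL CS B'S).
- have FB : F B x = 0%E by apply/eqP; rewrite eq_le nonpos.
  have FB' : F B' x = 1%E.
    by apply/eqP; rewrite eq_le B'1 leNgt; apply/negP => ?; apply: not_both_lt1; rewrite FB.
  right; split => C CS.
    by rewrite (indicator_cdf_eq xL CS BS).
  by rewrite (indicator_cdf_eq xL CS B'S).
Qed.

Lemma decisive_le x y S : inner x -> inner y -> x < y -> decisive x S -> decisive y S.
Proof.
case=> xL _ _ [yL _ [w wL yw]] xy SW B BS.
have Sx := indicator_split_profile S xL wL (lexx x) (lt_trans xy yw).
have Sy := indicator_split_profile S xL wL (ltW xy) yw.
rewrite (indicator_cdf_eq yL BS Sy).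
by apply/eqP; rewrite eq_le cdf_le1 -(SW _ Sx) le_cdf // ltW.
Qed.

Lemma not_decisive x S : inner x -> ~ decisive x S -> powerless x S /\ decisive x (~: S).
Proof. by move=> ix SW; case: (decisive_dichotomy S ix) => -[]. Qed.

Lemma decisive_powerlessC x S : inner x -> decisive x S -> powerless x (~: S).
Proof.
move=> ix SW; case: (decisive_dichotomy S ix) => -[] // SZ _.
by case: (decisive_powerless_excl ix SW SZ).
Qed.

Lemma decisive_ge x y S : inner x -> inner y -> x < y -> decisive y S -> decisive x S.
Proof.
move=> ix iy xy SW; apply: contrapT => /(not_decisive ix) [_ /(decisive_le ix iy xy) SCW].
exact: (decisive_powerless_excl iy SCW (decisive_powerlessC iy SW)).
Qed.

Lemma decisive_const x y S : inner x -> inner y -> decisive x S -> decisive y S.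
Proof.
move=> ix iy; case: (ltgtP x y) => [xy|yx|->] //; first exact: decisive_le.
exact: decisive_ge.
Qed.

Lemma decisive_lb (p : profile L n) x S (m : \bar R) : inner x -> decisive x S ->
  (m <= 1)%E -> (forall j, j \in S -> (m <= cdf (p j) x)%E) -> (m <= F p x)%E.
Proof.
move=> ix SW m1 mp; have [B BS] := exists_indicator S ix.
by apply: (levelSP_lb psiSP (B := B) (S := S)) => //; [case: ix | rewrite SW].
Qed.

Lemma powerless_ub (p : profile L n) x S (M : \bar R) : inner x -> powerless x S ->
  (0 <= M)%E -> (forall j, j \notin S -> (cdf (p j) x <= M)%E) -> (F p x <= M)%E.
Proof.
move=> ix SZ M0 pM; have [B BS] := exists_indicator S ix.
by apply: (levelSP_ub psiSP (B := B) (S := S)) => //; [case: ix | rewrite SZ].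
Qed.

Lemma not_decisive_setI x y S T : inner x -> inner y ->
  decisive x S -> decisive x T -> ~ decisive x (S :&: T) ->
  [/\ decisive y S, powerless y (~: T), powerless y (S :&: T) & decisive y (~: (S :&: T))].
Proof.
move=> ix iy SW TW STnW.
have [STZ STCW] : powerless y (S :&: T) /\ decisive y (~: (S :&: T)).
  by apply: not_decisive => // /(decisive_const iy ix).
split => //; first exact: decisive_const ix iy SW.
by apply: decisive_powerlessC => //; exact: decisive_const ix iy TW.
Qed.

(* Otherwise the bounds of [not_decisive_setI] make [psi] flat on two intervals
   of a staircase profile where every voter rises on one of them. *)
Lemma decisive_setI x S T : inner x -> decisive x S -> decisive x T -> decisive x (S :&: T).
Proof.
move=> ix SW TW; have [_ [a aL ax] [b bL xb]] := ix.
apply: contrapT => STnW.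
have bounds y (iy : inner y) := not_decisive_setI ix iy SW TW STnW.
pose d := (b - a) / 5.
have d0 : 0 < d by rewrite divr_gt0 // subr_gt0 (lt_trans ax xb).
have bE : b = a + 5 * d by rewrite /d; field.
have [i1 i2 i3 i4] : [/\ inner (a + d), inner (a + 2 * d), inner (a + 3 * d) & inner (a + 4 * d)].
  by split; apply: (inner_between aL bL); lra.
have [SW1 _ _ _] := bounds _ i1; have [_ TCZ2 _ _] := bounds _ i2.
have [_ _ _ STCW3] := bounds _ i3; have [_ _ STZ4 _] := bounds _ i4.
apply: (spp_no_flat_staircase
  (c0 := fun j => if j \in S then 1/4 else 0)
  (c1 := fun j => if j \in S then (if j \in T then 1/4 else 3/8) else 1/8)
  (c2 := fun j => if (j \in S) && (j \in T) then 1/4 else 3/4)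
  (c3 := fun j => if (j \in S) && (j \in T) then 1/2 else 3/4)
  (z0 := a + d) (z1 := a + 2 * d) (z2 := a + 3 * d) (z3 := a + 4 * d) (z4 := b));
  [by case: i1 | done | lra | lra | lra | lra | | | ].
- by move=> j; case: (j \in S); case: (j \in T); rewrite /=; split; lra.
- by move=> j; case: (j \in S); case: (j \in T); rewrite /=; [right | left | left | left]; lra.
move=> p cdf_p; split.
- apply: (@le_trans _ _ (1/4)%:E).
    apply: (powerless_ub i2 TCZ2); first by rewrite lee_fin; lra.
    move=> j; rewrite inE negbK => jT; have [_ -> _ _] := cdf_p j.
    by rewrite jT; case: (j \in S); rewrite lee_fin; lra.
  apply: (decisive_lb i1 SW1); first by rewrite lee_fin; lra.
  by move=> j jS; have [-> _ _ _] := cdf_p j; rewrite jS.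
- apply: (@le_trans _ _ (3/4)%:E).
    apply: (powerless_ub i4 STZ4); first by rewrite lee_fin; lra.
    by move=> j; rewrite inE => /negbTE jST; have [_ _ _ ->] := cdf_p j; rewrite jST.
  apply: (decisive_lb i3 STCW3); first by rewrite lee_fin; lra.
  by move=> j; rewrite !inE => /negbTE jST; have [_ _ -> _] := cdf_p j; rewrite jST.
Qed.

Lemma decisive_setT x : inner x -> decisive x [set: 'I_n].
Proof.
case=> xL _ _ B BT.
have -> : F B x = F (fun=> dirac_on x) x.
  by apply: (levelSP_cdf_eq psiSP) => // j; rewrite BT inE cdf_dirac_on // lexx.
by rewrite unanimous_cdf // cdf_dirac_on // lexx.
Qed.

Lemma not_decisive_set0 x : inner x -> ~ decisive x finset.set0.
Proof.
move=> ix S0W; have [xL _ [v vL xv]] := ix.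
have [B B0] := exists_indicator (finset.set0 : {set 'I_n}) ix.
move: (S0W B B0); have -> : F B x = F (fun=> dirac_on v) x.
  by apply: (levelSP_cdf_eq psiSP) => // j; rewrite B0 inE cdf_dirac_on // (lt_geF xv).
by rewrite unanimous_cdf // cdf_dirac_on // (lt_geF xv) => /eqP; rewrite eqe eq_sym oner_eq0.
Qed.

Lemma decisive_singleton x : inner x -> exists d, decisive x [set d].
Proof.
move=> ix; suff : forall k (S : {set 'I_n}),
    (#|S| <= k)%N -> decisive x S -> exists d, decisive x [set d].
  by move/(_ n [set: 'I_n]%SET); apply; [rewrite cardsT card_ord | exact: decisive_setT].
elim=> [|k IH] S Sk SW.
  by move: Sk SW; rewrite leqn0 cards_eq0 => /eqP ->; move/(not_decisive_set0 ix).
have [Sk'|kS] := leqP #|S| k; first exact: IH Sk' SW.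
have /set0Pn[d dS] : S != finset.set0 by rewrite -card_gt0 (leq_ltn_trans _ kS).
have [dW|dnW] := pselect (decisive x [set d]); first by exists d.
apply: (IH (S :\ d)); last by rewrite finset.setDE; exact: decisive_setI SW (not_decisive ix dnW).2.
by move: Sk; rewrite (cardsD1 d S) dS add1n ltnS.
Qed.

Lemma cdf_psi_dictator d x0 x (p : profile L n) : inner x0 -> decisive x0 [set d] ->
  inner x -> F p x = cdf (p d) x.
Proof.
move=> i0 dW0 ix; have dW := decisive_const i0 ix dW0.
apply/eqP; rewrite eq_le; apply/andP; split.
  apply: (powerless_ub ix (decisive_powerlessC ix dW)) => [|j]; first exact: cdf_ge0.
  by rewrite !inE negbK => /eqP ->.
apply: (decisive_lb ix dW) => [|j]; first exact: cdf_le1.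
by rewrite inE => /eqP ->.
Qed.

End Decisive.

Section CdfDeterminesMeasure.
Context (R : realType) (L : interval R).

Lemma cdf_eq_right (p q : ProbOn L) m c : m \in L -> c \in L -> m < c ->
  (forall y, m < y -> y < c -> cdf p y = cdf q y) -> cdf p m = cdf q m.
Proof.
move=> mL cL mc pq.
pose e := (c - m) / 2.
have e0 : 0 < e by rewrite divr_gt0 // subr_gt0.
pose A k : set R := below L (m + Num.min e k.+1%:R^-1).
have mA k : measurable (A k) by exact: measurable_below.
have A_noninc : {homo A : i j / (i <= j)%N >-> (j <= i)%O}.
  move=> i j ij; apply/subsetPset => x [xL xj]; split => //.
  apply: (le_trans xj); rewrite lerD2l le_min ge_min lexx /= ge_min; apply/orP; right.
  by rewrite lef_pV2 ?posrE // ler_nat.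
have capA : \bigcap_k A k = below L m.
  apply/seteqP; split => x; last first.
    move=> [xL xm] k _; split => //; apply: (le_trans xm).
    by rewrite lerDl le_min (ltW e0) invr_ge0 ler0n.
  move=> Ax; have [xL _] := Ax 0%N I; split => //; rewrite leNgt; apply/negP => mx.
  have [k mkx] := ltr_add_invr mx; have [_] := Ax k I; apply/negP; rewrite -ltNge.
  by apply: le_lt_trans mkx; rewrite lerD2l ge_min lexx orbT.
have cvgA (P : ProbOn L) : (pm P \o A) @ \oo --> pm P (below L m).
  rewrite -capA; apply: nonincreasing_cvg_mu => //.
    by rewrite (le_lt_trans (probability_le1 _ (mA 0%N))) // ltey.
  by rewrite capA; exact: measurable_below.
have pqA : pm p \o A = pm q \o A.
  apply: funext => k /=; apply: pq; first by rewrite ltrDl lt_min e0 invr_gt0 ltr0n.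
  by apply: le_lt_trans (_ : m + e < c); [rewrite lerD2l ge_min lexx | rewrite /e; lra].
have := cvgA p; rewrite pqA => cvgp.
by rewrite /cdf -(cvg_lim _ cvgp) // -(cvg_lim _ (cvgA q)).
Qed.

Lemma cdf_eq_of_inner (p q : ProbOn L) :
  (forall y, inner L y -> cdf p y = cdf q y) -> forall y, y \in L -> cdf p y = cdf q y.
Proof.
move=> pq y yL; have [[v vL yv]|nv] := pselect (exists2 v, v \in L & y < v).
  apply: (cdf_eq_right yL vL yv) => z yz zv; apply: pq.
  exact: inner_between yL vL yz zv.
by rewrite !cdf_ubL // => z zL; rewrite leNgt; apply/negP => yz; apply: nv; exists z.
Qed.

Lemma pm_setI_itv (p : ProbOn L) X : measurable X -> pm p X = pm p (X `&` [set` L]).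
Proof.
move=> mX.
have -> : pm p X = (pm p (X `\` [set` L]) + pm p (X `&` [set` L]))%E.
  exact: measureDI (measurable_itv L).
suff -> : pm p (X `\` [set` L]) = 0%E by rewrite add0e.
apply/eqP; rewrite eq_le measure_ge0 andbT -(proj2_sig p).
apply: le_measure; rewrite ?inE; last by move=> x [].
  by apply: measurableD => //; exact: measurable_itv.
by apply: measurableC; exact: measurable_itv.
Qed.

Lemma pm_below_eq (p q : ProbOn L) : (forall y, y \in L -> cdf p y = cdf q y) ->
  forall y, pm p (below L y) = pm q (below L y).
Proof.
move=> pq y; have [yL|yNL] := boolP (y \in L); first exact: pq.
have [[z zL zy]|nz] := pselect (exists2 z, z \in L & z <= y).
  have -> : below L y = [set` L].
    apply/seteqP; split => x; first by case.
    move=> /= xL; split => //; rewrite leNgt; apply/negP => yx.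
    by move: yNL; rewrite (itv_between zL xL zy (ltW yx)).
  by rewrite !pm_itv.
have -> : below L y = set0 by apply/seteqP; split => x // [xL xy]; apply: nz; exists x.
by rewrite !measure0.
Qed.

Lemma meq_of_cdf (p q : ProbOn L) : (forall y, y \in L -> cdf p y = cdf q y) -> meq p q.
Proof.
move=> /pm_below_eq pq A mA _.
apply: (measure_unique (@ocitv R) (fun k => `]- k%:R, k%:R]%classic)) => //.
- exact: ocitvI.
- by move=> k; exact: is_ocitv.
- apply/seteqP; split => // x _; exists (Num.bound `|x|) => //=; rewrite in_itv /=.
  have x_lt := archi_boundP (normr_ge0 x).
  apply/andP; split; first by rewrite ltrNl (le_lt_trans _ x_lt) // -normrN ler_norm.
  by rewrite (le_trans (ler_norm x)) // ltW.
- move=> X /ocitvP [->|[[x1 x2] /= _ ->]]; first by rewrite !measure0.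
  rewrite (pm_setI_itv p (measurable_itv _)) (pm_setI_itv q (measurable_itv _)).
  have -> : [set` `]x1, x2]] `&` [set` L] = below L x2 `\` below L x1.
    apply/seteqP; split => x /=.
      rewrite in_itv /= => -[/andP[x1x xx2] xL]; split; first by split.
      by move=> [_ xx1]; move: x1x; rewrite ltNge xx1.
    move=> [[xL xx2] xx1]; split => //; rewrite in_itv /= xx2 andbT ltNge.
    by apply/negP => ?; apply: xx1.
  have belowI : below L x2 `&` below L x1 = below L (Num.min x1 x2).
    apply/seteqP; split => x /=.
      by move=> [[xL ?] [_ ?]]; split; rewrite // le_min; apply/andP.
    by move=> [xL]; rewrite le_min => /andP[].
  have belowD (P : ProbOn L) : pm P (below L x2 `\` below L x1) =
      (pm P (below L x2) - pm P (below L (Num.min x1 x2)))%E.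
    rewrite -belowI; apply: measureD; try exact: measurable_below.
    by rewrite (le_lt_trans (probability_le1 _ (measurable_below L x2))) // ltey.
  by rewrite !belowD !pq.
- by move=> k; rewrite (le_lt_trans (probability_le1 _ (measurable_itv _))) // ltey.
Qed.

End CdfDeterminesMeasure.

Section Dictatorship.
Context (R : realType) (L : interval R) (n : nat) (psi : PAF L n).

Lemma dirac_setC_itv a : a \in L -> (\d_a : probability R R) (~` [set` L]) = 0%E.
Proof. by move=> aL; rewrite /= diracE memNset. Qed.

Lemma levelSP_dictatorial : (exists a b, a \in L /\ b \in L /\ a < b) ->
  level_SP psi -> unanimous psi -> strong_plausibility_preserving psi -> dictatorial psi.
Proof.
move=> [a [b [aL [bL ab]]]] psiSP psiU psiSPP.
pose dflt : ProbOn L := exist _ (\d_a : probability R R) (dirac_setC_itv aL).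
have i0 : inner L ((a + b) / 2) by apply: (inner_between aL bL); lra.
have [d dW] := decisive_singleton psiSP psiU psiSPP dflt i0.
exists d => p; apply/meq_of_cdf/cdf_eq_of_inner => y iy.
exact: (cdf_psi_dictator psiSP psiU psiSPP dflt p i0 dW iy).
Qed.

Lemma dictatorial_levelSP : dictatorial psi -> level_SP psi.
Proof.
move=> [i psiD] j p q a _; rewrite !(cdf_meq _ (psiD _)) /upd.
by case: eqP => [->|_]; rewrite ?ltxx; split.
Qed.

Lemma dictatorial_unanimous : dictatorial psi -> unanimous psi.
Proof. by move=> [i psiD] q; exact: psiD. Qed.

Lemma dictatorial_spp : dictatorial psi -> strong_plausibility_preserving psi.
Proof. by move=> [i psiD] p A mA AL pA; rewrite psiD. Qed.

End Dictatorship.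

Theorem mainTheorem7 (R : realType) (L : interval R)
  (hL : exists a b : R, a \in L /\ b \in L /\ a < b)
  (n : nat) (psi : PAF L n) :
  (level_SP psi /\ unanimous psi /\ strong_plausibility_preserving psi) <->
  dictatorial psi.
Proof.
split=> [[psiSP [psiU psiSPP]] | psiD]; first exact: levelSP_dictatorial.
split; first exact: dictatorial_levelSP.
by split; [exact: dictatorial_unanimous | exact: dictatorial_spp].
Qed.
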